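(* There is a constant $C$ such that for every $T\ge2$ there is an online forecasting algorithm which, against every (possibly adaptive) sequence of outcomes $b_1,\dots,b_T\in\{0,1\}$, guarantees $\mathrm{Cal}(\mathbf x_{1:T},\mathbf b_{1:T})\le C\,T^{1/3}\log T$.
   Context: Online calibration: in each round $t$ the forecaster, knowing $b_1,\dots,b_{t-1}$, outputs a finitely supported distribution $\mathbf x_t\in\Delta([0,1])$ over predictions; then the adversary, knowing $\mathbf x_1,\dots,\mathbf x_t$, chooses $b_t\in\{0,1\}$. Writing $\mathbf x_t[p]$ for the probability that $\mathbf x_t$ assigns to $p$, $W_p=\sum_t\mathbf x_t[p]$ and $B_p=\sum_t b_t\mathbf x_t[p]$, the $\ell_2$-calibration error is $$\mathrm{Cal}(\mathbf x_{1:T},\mathbf b_{1:T})=\sum_{p\in[0,1]:\,W_p>0}W_p\Big(p-\frac{B_p}{W_p}\Big)^2 .$$ *)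

From Stdlib Require Import Reals Lra List.
Import ListNotations.
Open Scope R_scope.

(* A finitely supported distribution over [0,1], given as a list of
   (point, probability) pairs; repeated points add up. *)
Definition dist := list (R * R).

Definition sum_weights (d : dist) : R :=
  fold_right (fun pw s => snd pw + s) 0 d.

Definition valid_dist (d : dist) : Prop :=
  (forall pw, In pw d -> 0 <= fst pw <= 1 /\ 0 <= snd pw) /\
  sum_weights d = 1.

Definition mass (d : dist) (p : R) : R :=
  fold_right (fun pw s => (if Req_EM_T (fst pw) p then snd pw else 0) + s) 0 d.

(* A (deterministic) forecaster maps the history b_1..b_{t-1}
   (chronological order) to the distribution x_t. *)
Definition forecaster := list bool -> dist.

Definition forecasts (A : forecaster) (bs : list bool) : list dist :=
  map (fun t : nat => A (firstn t bs)) (seq 0%nat (length bs)).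

Definition Wp (xs : list dist) (p : R) : R :=
  fold_right (fun x s => mass x p + s) 0 xs.

Definition Bp (xs : list dist) (bs : list bool) (p : R) : R :=
  fold_right (fun (xb : dist * bool) (s : R) => (if snd xb then mass (fst xb) p else 0) + s) 0
    (combine xs bs).

(* All points appearing in some forecast, without duplicates; every p with
   W_p > 0 is among them. *)
Definition support_points (xs : list dist) : list R :=
  nodup Req_EM_T (flat_map (map fst) xs).

Definition Cal (xs : list dist) (bs : list bool) : R :=
  fold_right
    (fun p s =>
       (if Rlt_dec 0 (Wp xs p)
        then Wp xs p * (p - Bp xs bs p / Wp xs p) ^ 2 else 0) + s)
    0 (support_points xs).

From Pilot Require Import Defs.
From Stdlib Require Import Reals List.
From Stdlib Require Import Lra Lia Psatz ClassicalEpsilon.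
Import ListNotations.
Open Scope R_scope.

(* Predict only on the grid 0, 1/m, ..., 1.  The rounds in which a grid point p
   received mass form the bucket of p; its weight is W_p and its weighted count
   of ones is B_p.  Let q_p = (B_p + 1/2) / (W_p + 1) be the regularized leader
   of the bucket.  The potential sum_p [loss of p - regularized minimal loss
   - ln (W_p + 1)] grows in each round by at most the expected gap
   sum_p x_t[p] ((p - b)^2 - (q_p - b)^2).  Since p - q_p changes sign along
   the grid, a mixture of two adjacent grid points keeps this gap below
   1/(4 m^2) whatever the outcome b.  The calibration error of a bucket is at
   most its potential term plus ln (T + 1) + 1/4, hence
   Cal <= T/(4 m^2) + (m + 1) (ln (T + 1) + 1/4), and m ~ T^(1/3) concludes. *)

Definition lsum {A} (f : A -> R) (l : list A) : R := fold_right (fun a s => f a + s) 0 l.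

Section ListSums.
Context {A : Type}.
Implicit Types (f g : A -> R) (l : list A).

Lemma lsum_nil f : lsum f [] = 0.
Proof. reflexivity. Qed.

Lemma lsum_cons f a l : lsum f (a :: l) = f a + lsum f l.
Proof. reflexivity. Qed.

Lemma lsum_app f l1 l2 : lsum f (l1 ++ l2) = lsum f l1 + lsum f l2.
Proof.
  induction l1 as [|a l1 IH]; rewrite ?lsum_nil; [simpl; lra|].
  rewrite <- app_comm_cons, !lsum_cons, IH; lra.
Qed.

Lemma lsum_le f g l : (forall a, In a l -> f a <= g a) -> lsum f l <= lsum g l.
Proof.
  induction l as [|a l IH]; intros Hfg; rewrite ?lsum_nil, ?lsum_cons; [lra|].
  assert (f a <= g a) by (apply Hfg; left; auto).
  assert (lsum f l <= lsum g l) by (apply IH; intros; apply Hfg; right; auto).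
  lra.
Qed.

Lemma lsum_ext f g l : (forall a, In a l -> f a = g a) -> lsum f l = lsum g l.
Proof.
  intros Hfg; apply Rle_antisym; apply lsum_le; intros a Ha; rewrite (Hfg a Ha); lra.
Qed.

Lemma lsum_plus f g l : lsum (fun a => f a + g a) l = lsum f l + lsum g l.
Proof. induction l as [|a l IH]; rewrite ?lsum_nil, ?lsum_cons, ?IH; lra. Qed.

Lemma lsum_minus f g l : lsum (fun a => f a - g a) l = lsum f l - lsum g l.
Proof. induction l as [|a l IH]; rewrite ?lsum_nil, ?lsum_cons, ?IH; lra. Qed.

Lemma lsum_const c l : lsum (fun _ => c) l = INR (length l) * c.
Proof.
  induction l as [|a l IH]; rewrite ?lsum_nil, ?lsum_cons, ?IH; simpl length;
    rewrite ?S_INR; simpl; lra.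
Qed.

Lemma lsum_nonneg f l : (forall a, In a l -> 0 <= f a) -> 0 <= lsum f l.
Proof.
  intros Hf; apply Rle_trans with (lsum (fun _ => 0) l); [rewrite lsum_const; lra|].
  now apply lsum_le.
Qed.

Lemma lsum_split f l a : In a l -> exists l1 l2,
  l = l1 ++ a :: l2 /\ lsum f l = f a + lsum f (l1 ++ l2).
Proof.
  intros Ha; destruct (in_split a l Ha) as [l1 [l2 ->]].
  exists l1, l2; split; [reflexivity|]. rewrite !lsum_app, lsum_cons; lra.
Qed.

Lemma lsum_incl f l k : NoDup l -> NoDup k -> incl l k ->
  (forall a, In a k -> 0 <= f a) -> lsum f l <= lsum f k.
Proof.
  revert k; induction l as [|a l IH]; intros k Hl Hk Hlg Hf.
  - rewrite lsum_nil; now apply lsum_nonneg.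
  - inversion Hl as [|? ? Hal Hl']; subst.
    destruct (lsum_split f k a (Hlg a (or_introl eq_refl))) as [k1 [k2 [-> ->]]].
    rewrite lsum_cons. apply Rplus_le_compat_l, IH; auto.
    + now apply NoDup_remove_1 with a.
    + intros y Hy. assert (Hyg := Hlg y (or_intror Hy)).
      apply in_app_iff in Hyg as [Hy1|[<-|Hy2]]; apply in_app_iff; tauto.
    + intros y Hy; apply Hf, in_app_iff; apply in_app_iff in Hy; simpl; tauto.
Qed.

Lemma lsum_single f l a : NoDup l -> In a l ->
  (forall b, In b l -> b <> a -> f b = 0) -> lsum f l = f a.
Proof.
  intros Hl Ha Hf.
  destruct (lsum_split f l a Ha) as [l1 [l2 [-> ->]]].
  assert (Hnot := NoDup_remove_2 _ _ _ Hl).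
  rewrite (lsum_ext f (fun _ => 0)), lsum_const; [lra|].
  intros b Hb; apply Hf.
  - apply in_app_iff in Hb; apply in_app_iff; simpl; tauto.
  - intros ->; tauto.
Qed.

End ListSums.

Lemma mass_cons pw d p :
  mass (pw :: d) p = (if Req_EM_T (fst pw) p then snd pw else 0) + mass d p.
Proof. reflexivity. Qed.

Lemma mass_bounds d p : valid_dist d -> 0 <= mass d p <= 1.
Proof.
  intros [Hd Hsum]; rewrite <- Hsum; clear Hsum.
  induction d as [|[x w] d IH]; [cbn; lra|].
  assert (Hw : 0 <= w) by apply (Hd (x, w) (or_introl eq_refl)).
  assert (IH' := IH (fun pw Hpw => Hd pw (or_intror Hpw))).
  rewrite mass_cons; change (sum_weights ((x, w) :: d)) with (w + sum_weights d).
  cbn [fst snd]; destruct (Req_EM_T x p); lra.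
Qed.

Lemma lsum_mass_mul (d : Defs.dist) (g : list R) (F : R -> R) : NoDup g ->
  (forall pw, In pw d -> In (fst pw) g) ->
  lsum (fun p => mass d p * F p) g = lsum (fun pw => snd pw * F (fst pw)) d.
Proof.
  intros Hg; induction d as [|pw d IH]; intros Hd.
  - rewrite (lsum_ext _ (fun _ => 0)), lsum_const, lsum_nil; [lra|].
    intros p _; cbn; lra.
  - rewrite (lsum_ext _ (fun p => (if Req_EM_T (fst pw) p then snd pw else 0) * F p
                                  + mass d p * F p)).
    2: { intros p _; rewrite mass_cons; lra. }
    rewrite lsum_plus, lsum_cons, IH by (intros; apply Hd; right; auto).
    f_equal. rewrite (lsum_single _ _ (fst pw)); auto using in_eq.
    + destruct (Req_EM_T (fst pw) (fst pw)); [reflexivity|congruence].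
    + intros p _ Hp; destruct (Req_EM_T (fst pw) p); [congruence|lra].
Qed.

Lemma Wp_snoc xs x p : Wp (xs ++ [x]) p = Wp xs p + mass x p.
Proof.
  change (lsum (fun y => mass y p) (xs ++ [x]) = lsum (fun y => mass y p) xs + mass x p).
  rewrite lsum_app, lsum_cons, lsum_nil; lra.
Qed.

Lemma combine_snoc {X Y} (xs : list X) (ys : list Y) x y : length xs = length ys ->
  combine (xs ++ [x]) (ys ++ [y]) = combine xs ys ++ [(x, y)].
Proof.
  revert ys; induction xs as [|x' xs IH]; intros [|y' ys] Hlen;
    try discriminate; cbn in *; [reflexivity|].
  rewrite IH; auto.
Qed.

Lemma Bp_snoc xs bs x b p : length xs = length bs ->
  Bp (xs ++ [x]) (bs ++ [b]) p = Bp xs bs p + (if b then 1 else 0) * mass x p.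
Proof.
  intros Hlen; set (hit := fun xb : Defs.dist * bool => if snd xb then mass (fst xb) p else 0).
  change (lsum hit (combine (xs ++ [x]) (bs ++ [b])) = lsum hit (combine xs bs)
          + (if b then 1 else 0) * mass x p).
  rewrite combine_snoc, lsum_app, lsum_cons, lsum_nil by assumption.
  unfold hit; destruct b; cbn [fst snd]; lra.
Qed.

Lemma Wp_Bp_bounds xs bs p : (forall x, In x xs -> valid_dist x) ->
  0 <= Bp xs bs p <= Wp xs p /\ Wp xs p <= INR (length xs).
Proof.
  revert bs; induction xs as [|x xs IH]; intros bs Hv.
  - destruct bs; cbn; lra.
  - assert (Hx := mass_bounds x p (Hv x (in_eq _ _))).
    change (length (x :: xs)) with (S (length xs)); rewrite S_INR.
    change (Wp (x :: xs) p) with (mass x p + Wp xs p).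
    destruct bs as [|b bs].
    + destruct (IH [] (fun y Hy => Hv y (in_cons _ _ _ Hy))).
      change (Bp (x :: xs) [] p) with 0; lra.
    + destruct (IH bs (fun y Hy => Hv y (in_cons _ _ _ Hy))).
      change (Bp (x :: xs) (b :: bs) p) with
        ((if b then mass x p else 0) + Bp xs bs p).
      destruct b; lra.
Qed.

Lemma ln_le x y : 0 < x -> x <= y -> ln x <= ln y.
Proof.
  intros Hx [Hxy|<-]; [left; now apply ln_increasing|lra].
Qed.

Lemma ln_le_sub1 x : 0 < x -> ln x <= x - 1.
Proof. intros Hx; assert (H := exp_ineq1_le (ln x)); rewrite exp_ln in H; lra. Qed.

Lemma ln_increment_ge S w : 0 < S -> 0 <= w -> w / (S + w) <= ln (S + w) - ln S.
Proof.
  intros HS Hw.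
  assert (Hle := ln_le_sub1 (S / (S + w)) ltac:(apply Rdiv_lt_0_compat; lra)).
  unfold Rdiv in Hle; rewrite ln_mult, ln_Rinv in Hle by (try apply Rinv_0_lt_compat; lra).
  replace (S * / (S + w) - 1) with (- (w / (S + w))) in Hle by (field; lra).
  lra.
Qed.

(* With total weight [W] and weighted count [B] of ones, [sq_loss p W B] is the
   weighted squared loss of the constant prediction [p], and [reg_loss_min W B] is
   the minimum over [q] of [sq_loss q W B + (q - 1/2)^2], attained at
   [q = (B + 1/2) / (W + 1)]. *)
Definition sq_loss (p W B : R) : R := p ^ 2 * W - 2 * p * B + B.

Definition reg_loss_min (W B : R) : R := B + / 4 - (B + / 2) ^ 2 / (W + 1).

Definition bucket_potential (p W B : R) : R := sq_loss p W B - reg_loss_min W B - ln (W + 1).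

Lemma bucket_potential_step p W B w b : 0 <= B <= W -> 0 <= w <= 1 -> b = 0 \/ b = 1 ->
  bucket_potential p (W + w) (B + b * w) - bucket_potential p W B
  <= w * ((p - b) ^ 2 - ((B + / 2) / (W + 1) - b) ^ 2).
Proof.
  intros HB Hw Hb; unfold bucket_potential.
  set (S := W + 1); set (N := B + / 2); set (q := N / S).
  assert (HS : 0 < S) by (unfold S; lra).
  assert (Hloss : sq_loss p (W + w) (B + b * w) - sq_loss p W B = w * (p - b) ^ 2)
    by (unfold sq_loss; destruct Hb; subst; ring).
  assert (Hmin : reg_loss_min (W + w) (B + b * w) - reg_loss_min W B
                 = w * (q - b) ^ 2 - w * w * (q - b) ^ 2 / (S + w)).
  { unfold reg_loss_min, q, N, S; replace (W + w + 1) with (W + 1 + w) by ring.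
    destruct Hb; subst; field; lra. }
  assert (Hq : 0 <= q <= 1).
  { assert (HqS : q * S = N) by (unfold q; field; lra).
    unfold N, S in *; nra. }
  assert (Hfollow : w * w * (q - b) ^ 2 / (S + w) <= w / (S + w)).
  { apply Rmult_le_compat_r; [apply Rlt_le, Rinv_0_lt_compat; lra|].
    assert (Hqb : 0 <= (q - b) ^ 2 <= 1) by (split; [apply pow2_ge_0|destruct Hb; subst; nra]).
    assert (w * w <= w) by nra.
    assert (0 <= w * w) by nra.
    nra. }
  assert (Hln := ln_increment_ge S w HS (proj1 Hw)).
  replace (W + w + 1) with (S + w) by (unfold S; ring).
  lra.
Qed.

Lemma bucket_error_le p W B : 0 <= B <= W ->
  (if Rlt_dec 0 W then W * (p - B / W) ^ 2 else 0) <= sq_loss p W B - reg_loss_min W B + / 4.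
Proof.
  intros HB; unfold sq_loss, reg_loss_min.
  destruct (Rlt_dec 0 W) as [HW|HW].
  - replace (W * (p - B / W) ^ 2) with (p ^ 2 * W - 2 * p * B + B ^ 2 / W) by (field; lra).
    enough (B ^ 2 / W <= (B + / 2) ^ 2 / (W + 1)) by lra.
    apply (Rmult_le_reg_r (W * (W + 1))); [nra|].
    replace (B ^ 2 / W * (W * (W + 1))) with (B ^ 2 * (W + 1)) by (field; lra).
    replace ((B + / 2) ^ 2 / (W + 1) * (W * (W + 1))) with ((B + / 2) ^ 2 * W) by (field; lra).
    nra.
  - replace W with 0 by lra; replace B with 0 by lra; lra.
Qed.

Definition grid_point (m i : nat) : R := INR i / INR m.

Definition grid (m : nat) : list R := map (grid_point m) (seq 0 (S m)).

Lemma discrete_ivt (d : nat -> R) n : 0 <= d 0%nat -> d (S n) <= 0 ->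
  exists j, (j <= n)%nat /\ 0 <= d j /\ d (S j) <= 0.
Proof.
  intros H0; induction n as [|n IH]; intros Hn; [exists 0%nat; auto|].
  destruct (Rle_dec (d (S n)) 0) as [Hle|Hgt].
  - destruct (IH Hle) as [j Hj]; exists j; intuition lia.
  - exists (S n); repeat split; auto; lra.
Qed.

(* The weight [a] with [a * u + (1 - a) * v = 0] cancels every term involving [b]. *)
Lemma two_point_hedge p k u v : 0 < k -> v <= 0 <= u -> exists a, 0 <= a <= 1 /\
  forall b, a * ((p - b) ^ 2 - (p + u - b) ^ 2)
            + (1 - a) * ((p + k - b) ^ 2 - (p + k + v - b) ^ 2) <= k ^ 2 / 4.
Proof.
  intros Hk Huv.
  destruct (Req_dec u v) as [Heq|Hne].
  - exists 1; split; [lra|intros b].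
    replace u with 0 by lra; assert (0 <= k ^ 2) by apply pow2_ge_0; lra.
  - set (D := u - v); assert (HD : 0 < D) by (unfold D; lra).
    exists (- v / D); split.
    + split; [apply Rmult_le_pos; [lra|apply Rlt_le, Rinv_0_lt_compat; lra]|].
      apply (Rmult_le_reg_r D); [lra|]; unfold D; field_simplify; lra.
    + intros b.
      replace (- v / D * ((p - b) ^ 2 - (p + u - b) ^ 2)
               + (1 - - v / D) * ((p + k - b) ^ 2 - (p + k + v - b) ^ 2))
        with (- (u * v) * (2 * k - D) / D) by (unfold D; field; lra).
      apply (Rmult_le_reg_r D); [lra|].
      replace (- (u * v) * (2 * k - D) / D * D) with (- (u * v) * (2 * k - D)) by (field; lra).
      assert (Hamgm : 0 <= - (u * v) <= D ^ 2 / 4).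
      { assert (0 <= (u + v) ^ 2) by apply pow2_ge_0; unfold D; split; nra. }
      destruct (Rle_dec 0 (2 * k - D)); [|nra].
      assert (0 <= (k - D) ^ 2) by apply pow2_ge_0.
      nra.
Qed.

Definition is_hedge (m : nat) (q : nat -> R) (j : nat) (a : R) : Prop :=
  (j < m)%nat /\ 0 <= a <= 1 /\
  forall b, 0 <= b <= 1 ->
    a * ((grid_point m j - b) ^ 2 - (q j - b) ^ 2)
    + (1 - a) * ((grid_point m (S j) - b) ^ 2 - (q (S j) - b) ^ 2) <= / (4 * INR m ^ 2).

Lemma hedge_exists m q : (1 <= m)%nat -> exists ja, is_hedge m q (fst ja) (snd ja).
Proof.
  intros Hm; destruct m as [|n]; [lia|]; clear Hm.
  set (M := INR (S n)); assert (HM : 0 < M) by apply lt_0_INR, Nat.lt_0_succ.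
  assert (Hbound : 0 < / (4 * M ^ 2)).
  { apply Rinv_0_lt_compat, Rmult_lt_0_compat; [lra|now apply pow_lt]. }
  assert (Hfirst : grid_point (S n) 0 = 0) by (unfold grid_point; now rewrite INR_0, Rdiv_0_l).
  assert (Hlast : grid_point (S n) (S n) = 1) by (unfold grid_point; fold M; field; lra).
  assert (Hstep : forall j, grid_point (S n) (S j) = grid_point (S n) j + / M)
    by (intros j; unfold grid_point; fold M; rewrite S_INR; field; lra).
  destruct (Rlt_dec (q 0%nat) 0) as [Hq0|Hq0].
  { exists (0%nat, 1); repeat split; cbn [fst snd]; try lia; try lra.
    intros b Hb; rewrite Hfirst; fold M; nra. }
  destruct (Rlt_dec 1 (q (S n))) as [Hq1|Hq1].
  { exists (n, 0); repeat split; cbn [fst snd]; try lia; try lra.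
    intros b Hb; rewrite Hlast; fold M; nra. }
  set (d := fun i => q i - grid_point (S n) i).
  destruct (discrete_ivt d n) as [j [Hj [Hdj Hdj1]]]; unfold d.
  { rewrite Hfirst; lra. }
  { rewrite Hlast; lra. }
  destruct (two_point_hedge (grid_point (S n) j) (/ M) (d j) (d (S j)))
    as [a [Ha Hhedge]]; [apply Rinv_0_lt_compat; lra|lra|].
  exists (j, a); repeat split; cbn [fst snd]; try lia; try lra.
  intros b _; fold M.
  replace (/ (4 * M ^ 2)) with ((/ M) ^ 2 / 4) by (field; lra).
  replace (q j) with (grid_point (S n) j + d j) by (unfold d; ring).
  replace (q (S j)) with (grid_point (S n) j + / M + d (S j)) by (unfold d; rewrite Hstep; ring).
  rewrite Hstep; apply Hhedge.
Qed.

Definition hedge (m : nat) (q : nat -> R) : nat * R :=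
  epsilon (inhabits (0%nat, 0)) (fun ja => is_hedge m q (fst ja) (snd ja)).

Lemma hedge_is_hedge m q : (1 <= m)%nat -> is_hedge m q (fst (hedge m q)) (snd (hedge m q)).
Proof. intros Hm; exact (epsilon_spec _ _ (hedge_exists m q Hm)). Qed.

Lemma forecasts_length A bs : length (forecasts A bs) = length bs.
Proof. unfold forecasts; now rewrite length_map, length_seq. Qed.

Lemma forecasts_snoc A bs b : forecasts A (bs ++ [b]) = forecasts A bs ++ [A bs].
Proof.
  unfold forecasts; rewrite length_app, Nat.add_1_r, seq_S, map_app; cbn [map].
  f_equal.
  - apply map_ext_in; intros t Ht; apply in_seq in Ht.
    now rewrite firstn_app, (proj2 (Nat.sub_0_le t (length bs))), app_nil_r by lia.
  - now rewrite Nat.add_0_l, firstn_app, Nat.sub_diag, firstn_all, firstn_O, app_nil_r.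
Qed.

Section SelfPlay.
Variable step : list Defs.dist -> list bool -> Defs.dist.

(* [run_rev r] is the list of forecasts made against the history [rev r]. *)
Fixpoint run_rev (r : list bool) : list Defs.dist :=
  match r with
  | [] => []
  | _ :: r' => run_rev r' ++ [step (run_rev r') (rev r')]
  end.

Definition self_play : forecaster := fun h => step (run_rev (rev h)) h.

Lemma forecasts_self_play bs : forecasts self_play bs = run_rev (rev bs).
Proof.
  induction bs as [|b bs IH] using rev_ind; [reflexivity|].
  rewrite forecasts_snoc, IH, rev_app_distr; cbn.
  now rewrite rev_involutive.
Qed.

Lemma self_play_step h : self_play h = step (forecasts self_play h) h.
Proof. now rewrite forecasts_self_play. Qed.

End SelfPlay.

Definition two_point (m j : nat) (a : R) : Defs.dist :=
  [(grid_point m j, a); (grid_point m (S j), 1 - a)].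

(* The per-bucket forecast of the regularized leader, see [reg_loss_min]. *)
Definition estimate (xs : list Defs.dist) (bs : list bool) (p : R) : R :=
  (Bp xs bs p + / 2) / (Wp xs p + 1).

Definition hedge_step (m : nat) (xs : list Defs.dist) (bs : list bool) : Defs.dist :=
  let ja := hedge m (fun i => estimate xs bs (grid_point m i)) in
  two_point m (fst ja) (snd ja).

Definition grid_forecaster (m : nat) : forecaster := self_play (hedge_step m).

Section GridForecaster.
Variable m : nat.
Hypothesis m_pos : (1 <= m)%nat.

Lemma grid_point_range i : (i <= m)%nat -> 0 <= grid_point m i <= 1.
Proof.
  intros Hi; unfold grid_point.
  assert (0 < INR m) by (apply lt_0_INR; lia).
  assert (INR i <= INR m) by now apply le_INR.
  assert (0 <= INR i) by apply pos_INR.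
  split; [apply Rmult_le_pos; [lra|apply Rlt_le, Rinv_0_lt_compat; lra]|].
  apply (Rmult_le_reg_r (INR m)); [lra|]; field_simplify; lra.
Qed.

Lemma grid_point_inj i j : grid_point m i = grid_point m j -> i = j.
Proof.
  intros H; unfold grid_point in H; assert (0 < INR m) by (apply lt_0_INR; lia).
  apply INR_eq, (Rmult_eq_reg_r (/ INR m)); auto; apply Rinv_neq_0_compat; lra.
Qed.

Lemma grid_NoDup : NoDup (grid m).
Proof.
  apply NoDup_map_NoDup_ForallPairs; [|apply seq_NoDup].
  intros i j _ _; apply grid_point_inj.
Qed.

Lemma grid_length : length (grid m) = S m.
Proof. unfold grid; now rewrite length_map, length_seq. Qed.

Lemma hedge_step_two_point xs bs : exists j a, hedge_step m xs bs = two_point m j a /\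
  is_hedge m (fun i => estimate xs bs (grid_point m i)) j a.
Proof. eexists _, _; split; [reflexivity|apply hedge_is_hedge, m_pos]. Qed.

Lemma two_point_on_grid j a : (j < m)%nat -> forall pw, In pw (two_point m j a) -> In (fst pw) (grid m).
Proof.
  intros Hj pw [<-|[<-|[]]]; cbn [fst]; apply in_map, in_seq; lia.
Qed.

Lemma hedge_step_valid xs bs : valid_dist (hedge_step m xs bs).
Proof.
  destruct (hedge_step_two_point xs bs) as [j [a [-> [Hj [Ha _]]]]].
  split; [|cbn; lra].
  intros pw [<-|[<-|[]]]; cbn; split; try lra; apply grid_point_range; lia.
Qed.

Lemma grid_forecaster_valid h : valid_dist (grid_forecaster m h).
Proof. apply hedge_step_valid. Qed.

Lemma grid_forecasts_valid bs x : In x (forecasts (grid_forecaster m) bs) -> valid_dist x.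
Proof. unfold forecasts; intros Hx; apply in_map_iff in Hx as [t [<- _]]; apply grid_forecaster_valid. Qed.

Lemma support_grid_forecasts bs : incl (support_points (forecasts (grid_forecaster m) bs)) (grid m).
Proof.
  intros p Hp; unfold support_points in Hp.
  apply nodup_In, in_flat_map in Hp as [x [Hx Hp]].
  unfold forecasts in Hx; apply in_map_iff in Hx as [t [<- _]].
  destruct (hedge_step_two_point (run_rev (hedge_step m) (rev (firstn t bs))) (firstn t bs))
    as [j [a [Heq [Hj _]]]].
  unfold grid_forecaster, self_play in Hp; rewrite Heq in Hp.
  apply in_map_iff in Hp as [pw [<- Hpw]].
  now apply (two_point_on_grid j a).
Qed.


Definition potential (xs : list Defs.dist) (bs : list bool) : R :=
  lsum (fun p => bucket_potential p (Wp xs p) (Bp xs bs p)) (grid m).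

Lemma two_point_expectation j a (F : R -> R) : (j < m)%nat ->
  lsum (fun p => mass (two_point m j a) p * F p) (grid m)
  = a * F (grid_point m j) + (1 - a) * F (grid_point m (S j)).
Proof.
  intros Hj; rewrite lsum_mass_mul by (apply grid_NoDup || now apply two_point_on_grid).
  unfold two_point; rewrite !lsum_cons, lsum_nil; cbn [fst snd]; lra.
Qed.

Lemma potential_step xs bs b : length xs = length bs -> (forall x, In x xs -> valid_dist x) ->
  potential (xs ++ [hedge_step m xs bs]) (bs ++ [b]) - potential xs bs <= / (4 * INR m ^ 2).
Proof.
  intros Hlen Hvalid.
  destruct (hedge_step_two_point xs bs) as [j [a [Hx [Hj [Ha Hhedge]]]]].
  set (x := hedge_step m xs bs) in *; set (bR := if b then 1 else 0).
  assert (HbR : bR = 0 \/ bR = 1) by (unfold bR; destruct b; auto).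
  unfold potential; rewrite <- lsum_minus.
  apply Rle_trans with
    (lsum (fun p => mass x p * ((p - bR) ^ 2 - (estimate xs bs p - bR) ^ 2)) (grid m)).
  - apply lsum_le; intros p _; rewrite Wp_snoc, Bp_snoc by assumption.
    apply bucket_potential_step; auto.
    + now apply Wp_Bp_bounds.
    + apply mass_bounds, hedge_step_valid.
  - rewrite Hx, two_point_expectation by assumption.
    apply Hhedge; destruct HbR; lra.
Qed.

Lemma potential_grid_forecasts bs :
  potential (forecasts (grid_forecaster m) bs) bs <= INR (length bs) * / (4 * INR m ^ 2).
Proof.
  induction bs as [|b bs IH] using rev_ind.
  - unfold potential; rewrite (lsum_ext _ (fun _ => 0)), lsum_const; [cbn; lra|].
    intros p _; unfold bucket_potential, sq_loss, reg_loss_min; cbn.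
    rewrite !Rplus_0_l, ln_1; field.
  - rewrite forecasts_snoc.
    replace (grid_forecaster m bs) with (hedge_step m (forecasts (grid_forecaster m) bs) bs)
      by (symmetry; apply self_play_step).
    assert (Hstep := potential_step (forecasts (grid_forecaster m) bs) bs b
                       (forecasts_length _ bs) (grid_forecasts_valid bs)).
    rewrite length_app, plus_INR; cbn [length INR]; lra.
Qed.

Lemma cal_grid_forecasts bs :
  Cal (forecasts (grid_forecaster m) bs) bs
  <= INR (length bs) * / (4 * INR m ^ 2) + INR (S m) * (ln (INR (length bs) + 1) + / 4).
Proof.
  set (xs := forecasts (grid_forecaster m) bs).
  set (err := fun p => if Rlt_dec 0 (Wp xs p) then Wp xs p * (p - Bp xs bs p / Wp xs p) ^ 2 else 0).
  change (Cal xs bs) with (lsum err (support_points xs)).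
  assert (Hbounds : forall p, 0 <= Bp xs bs p <= Wp xs p /\ Wp xs p <= INR (length bs)).
  { intros p; rewrite <- (forecasts_length (grid_forecaster m) bs).
    apply Wp_Bp_bounds, grid_forecasts_valid. }
  apply Rle_trans with (lsum err (grid m)).
  { apply lsum_incl; [apply NoDup_nodup|apply grid_NoDup|apply support_grid_forecasts|].
    intros p _; unfold err; destruct (Rlt_dec 0 (Wp xs p)); [|lra].
    apply Rmult_le_pos; [lra|apply pow2_ge_0]. }
  apply Rle_trans with
    (lsum (fun p => bucket_potential p (Wp xs p) (Bp xs bs p) + (ln (INR (length bs) + 1) + / 4))
       (grid m)).
  { apply lsum_le; intros p _; destruct (Hbounds p) as [HB HW].
    assert (ln (Wp xs p + 1) <= ln (INR (length bs) + 1)) by (apply ln_le; lra).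
    assert (Herr := bucket_error_le p _ _ HB).
    unfold err, bucket_potential; lra. }
  rewrite lsum_plus, lsum_const, grid_length.
  assert (Hpot := potential_grid_forecasts bs); unfold potential in Hpot; fold xs in Hpot.
  lra.
Qed.

End GridForecaster.

Lemma nat_cube_root T : exists m, (m * m * m <= T < (m + 1) * (m + 1) * (m + 1))%nat.
Proof.
  induction T as [|T [m Hm]]; [exists 0%nat; lia|].
  destruct (Nat.le_gt_cases ((m + 1) * (m + 1) * (m + 1)) (S T)).
  - exists (m + 1)%nat; nia.
  - exists m; lia.
Qed.

Lemma cube_root_le M : 0 <= M -> M <= Rpower (M * M * M) (1 / 3).
Proof.
  intros HM; destruct HM as [HM|<-]; [|rewrite !Rmult_0_l; unfold Rpower; left; apply exp_pos].
  replace (M * M * M) with (Rpower M (INR 3)) by (rewrite Rpower_pow by lra; cbn; ring).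
  rewrite Rpower_mult; replace (INR 3 * (1 / 3)) with 1 by (cbn; field).
  rewrite Rpower_1; lra.
Qed.

Lemma cal_rate M T : 1 <= M -> 2 <= T -> M * M * M <= T < (M + 1) * (M + 1) * (M + 1) ->
  T * / (4 * M ^ 2) + (M + 1) * (ln (T + 1) + / 4) <= 9 * Rpower T (1 / 3) * ln T.
Proof.
  intros HM HT [Hlow Hhigh].
  assert (HlnT : / 2 < ln T) by (apply Rlt_le_trans with (ln 2); [apply ln_lt_2|apply ln_le; lra]).
  assert (HlnT1 : ln (T + 1) <= 2 * ln T).
  { rewrite <- (Rmult_1_l 2) at 1; replace (1 * 2 * ln T) with (ln (T * T)) by (rewrite ln_mult; lra).
    apply ln_le; nra. }
  assert (Hfirst : T * / (4 * M ^ 2) <= 2 * M).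
  { apply (Rmult_le_reg_r (4 * M ^ 2)); [nra|].
    replace (T * / (4 * M ^ 2) * (4 * M ^ 2)) with T by (field; lra); nra. }
  assert (Hroot : M <= Rpower T (1 / 3)).
  { apply Rle_trans with (Rpower (M * M * M) (1 / 3)); [apply cube_root_le; lra|].
    apply Rle_Rpower_l; [lra|split; [nra|exact Hlow]]. }
  assert (0 <= ln (T + 1)) by (rewrite <- ln_1; apply ln_le; lra).
  apply Rle_trans with (9 * M * ln T); [nra|].
  apply Rmult_le_compat_r; lra.
Qed.

Theorem theorem4 :
  exists C : R, forall T : nat, (2 <= T)%nat ->
    exists A : forecaster,
      (forall h : list bool, valid_dist (A h)) /\
      forall bs : list bool, length bs = T ->
        Cal (forecasts A bs) bs <= C * Rpower (INR T) (1 / 3) * ln (INR T).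
Proof.
  exists 9; intros T HT.
  destruct (nat_cube_root T) as [m Hm].
  assert (Hm1 : (1 <= m)%nat) by (destruct m; lia).
  exists (grid_forecaster m); split; [now apply grid_forecaster_valid|].
  intros bs <-.
  eapply Rle_trans; [now apply cal_grid_forecasts|].
  rewrite S_INR; apply cal_rate.
  - now apply (le_INR 1).
  - now apply (le_INR 2).
  - rewrite Nat.add_1_r in Hm; rewrite <- !mult_INR, <- S_INR, <- !mult_INR.
    split; [apply le_INR|apply lt_INR]; lia.
Qed.
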